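(* Let $G_0$ be a connected graph containing vertices $u_1,u_2,u_3,u_4$ with $d_{G_0}(u_1)=1$, $d_{G_0}(u_2)=2$, $d_{G_0}(u_3)\in\{3,4\}$, $d_{G_0}(u_4)=1$, and $u_1u_2,u_3u_4\in E(G_0)$. Let $P=v_1v_2\cdots v_l$ ($l\ge 1$) be a path vertex-disjoint from $G_0$. Let $G_1$ be the graph obtained from the disjoint union of $G_0$ and $P$ by adding the edge $u_1v_1$, and let $G_2=G_1-u_1v_1+u_4v_1$. Then $SO(G_1)>SO(G_2)$ and $SO_{red}(G_1)>SO_{red}(G_2)$.
   Context: $d_G(u)$ denotes the degree of $u$ in $G$. $SO(G)=\sum_{uv\in E(G)}\sqrt{d_G(u)^2+d_G(v)^2}$ and $SO_{red}(G)=\sum_{uv\in E(G)}\sqrt{(d_G(u)-1)^2+(d_G(v)-1)^2}$. *)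

From mathcomp Require Import all_boot all_order all_algebra.
Set Implicit Arguments. Unset Strict Implicit. Unset Printing Implicit Defensive.
Import Order.TTheory GRing.Theory Num.Theory.
Local Open Scope ring_scope.

Definition simple_graph (T : finType) (e : rel T) : Prop :=
  symmetric e /\ irreflexive e.

Definition graph_connected (T : finType) (e : rel T) : Prop :=
  forall x y : T, connect e x y.

Definition deg (T : finType) (e : rel T) (u : T) : nat := #|[set v | e u v]|.

(* SO(G) = sum over edges uv of sqrt(d(u)^2 + d(v)^2); each (unordered) edge
   is counted twice in the sum over ordered adjacent pairs, hence the 1/2. *)
Definition SO (R : rcfType) (T : finType) (e : rel T) : R :=
  (\sum_(u : T) \sum_(v : T | e u v)
     Num.sqrt ((deg e u)%:R ^+ 2 + (deg e v)%:R ^+ 2)) / 2%:R.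

Definition SOred (R : rcfType) (T : finType) (e : rel T) : R :=
  (\sum_(u : T) \sum_(v : T | e u v)
     Num.sqrt (((deg e u)%:R - 1) ^+ 2 + ((deg e v)%:R - 1) ^+ 2)) / 2%:R.

(* The path v_1 v_2 ... v_{k+1} on vertex set 'I_k.+1 (vertex i is v_{i+1}). *)
Definition path_rel (k : nat) : rel 'I_k.+1 :=
  fun i j => (i.+1 == j :> nat) || (j.+1 == i :> nat).

Definition attach_rel (V0 : finType) (e0 : rel V0) (k : nat) (w : V0)
  : rel (V0 + 'I_k.+1)%type :=
  fun x y =>
    match x, y with
    | inl a, inl b => e0 a b
    | inr i, inr j => path_rel i j
    | inl a, inr j => (a == w) && (j == ord0)
    | inr i, inl b => (b == w) && (i == ord0)
    end.

Arguments attach_rel {V0} e0 k w x y.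
Arguments SO R {T} e.
Arguments SOred R {T} e.
Arguments deg {T} e u.

From mathcomp Require Import all_boot all_order all_algebra lra.
Set Implicit Arguments. Unset Strict Implicit. Unset Printing Implicit Defensive.
Import Order.TTheory GRing.Theory Num.Theory.
Local Open Scope ring_scope.

(* G1 and G2 live on the same vertex set and differ only at the
   non-adjacent pendant vertices u1 and u4, so for any symmetric degree-based
   index sum_{uv} f(d(u), d(v)) only ordered pairs with exactly one end in
   {u1, u4} change, and the difference is twice the difference of the rows
   of u1 and u4.  The terms on the edges to v1 cancel (v1 has the same degree
   in G1 and G2), leaving 2 (f(2,2) - f(1,2) + f(1,d) - f(2,d)) with
   d = d(u3).  For SO and SO_red this is positive because
   sqrt a + sqrt b > sqrt c + sqrt d whenever a + b = c + d and ab > cd. *)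

Lemma sum_symmetric_crossing (R : nmodType) (T : finType) (B : {pred T})
    (f : T -> T -> R) :
  (forall x y, f x y = f y x) ->
  (forall x y, (x \in B) = (y \in B) -> f x y = 0) ->
  \sum_x \sum_y f x y = (\sum_(x in B) \sum_y f x y) *+ 2.
Proof.
move=> f_sym f_same.
have cut_row x : \sum_y f x y = \sum_(y | (y \in B) != (x \in B)) f x y.
  rewrite (bigID (fun y => (y \in B) != (x \in B))) /= addrC big1 ?add0r //.
  by move=> y /negbNE/eqP Bxy; rewrite f_same.
rewrite (bigID (mem B)) /= mulr2n; congr (_ + _).
transitivity (\sum_(x | x \notin B) \sum_(y in B) f x y).
  apply: eq_bigr => x /negbTE Bx; rewrite cut_row Bx.
  by apply: eq_bigl => y; case: (y \in B).
rewrite exchange_big; apply: eq_bigr => y By; rewrite cut_row By.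
by apply: eq_big => [x|x _]; [case: (x \in B) | apply: f_sym].
Qed.

Lemma adj_pendantE (T : finType) (e : rel T) (u v w : T) :
  deg e u = 1%N -> e u v -> e u w = (w == v).
Proof.
move=> deg_u euv.
have : [set x | e u x] = [set v].
  apply/eqP; rewrite eq_sym eqEcard sub1set inE euv cards1 /=.
  by rewrite -/(deg e u) deg_u.
by move/setP/(_ w); rewrite !inE.
Qed.

Lemma neq_of_deg (T : finType) (e : rel T) (x y : T) : deg e x != deg e y -> x != y.
Proof. by apply: contra_neq => ->. Qed.

Section DegreeIndex.
Variables (R : zmodType) (phi : nat -> nat -> R).
Hypothesis phi_sym : forall a b, phi a b = phi b a.

Definition deg_row (T : finType) (E : rel T) (x : T) : R :=
  \sum_(y | E x y) phi (deg E x) (deg E y).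

Definition deg_index (T : finType) (E : rel T) : R := \sum_x deg_row E x.

Lemma deg_row_nbhd (T : finType) (E : rel T) (x : T) (s : seq T) :
  uniq s -> E x =1 mem s -> deg_row E x = \sum_(y <- s) phi (deg E x) (deg E y).
Proof. by move=> s_uniq Ex; rewrite big_uniq //; apply: eq_bigl. Qed.

Lemma deg_index_sub_local (T : finType) (E1 E2 : rel T) (B : {pred T}) :
  symmetric E1 -> symmetric E2 ->
  {in [predC B] &, E1 =2 E2} -> {in [predC B], deg E1 =1 deg E2} ->
  {in B &, forall x y, ~~ E1 x y} -> {in B &, forall x y, ~~ E2 x y} ->
  deg_index E1 - deg_index E2 = (\sum_(x in B) (deg_row E1 x - deg_row E2 x)) *+ 2.
Proof.
move=> E1_sym E2_sym E12 deg12 B_E1 B_E2.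
pose w (E : rel T) x y := if E x y then phi (deg E x) (deg E y) else 0.
have row_w (E : rel T) x : deg_row E x = \sum_y w E x y by rewrite /deg_row big_mkcond.
rewrite /deg_index -sumrB.
under eq_bigr do rewrite !row_w -sumrB.
under [X in _ = X *+ 2]eq_bigr do rewrite !row_w -sumrB.
apply: sum_symmetric_crossing => [x y|x y].
  by rewrite /w E1_sym E2_sym (phi_sym (deg E1 x)) (phi_sym (deg E2 x)).
case: (boolP (x \in B)) => Bx; case: (boolP (y \in B)) => By //= _.
  by rewrite /w (negbTE (B_E1 _ _ Bx By)) (negbTE (B_E2 _ _ Bx By)) subrr.
by rewrite /w E12 ?deg12 ?subrr.
Qed.

End DegreeIndex.

Section Attach.
Variables (V0 : finType) (e0 : rel V0) (k : nat).
Implicit Types w a b : V0.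
Local Notation attach w := (attach_rel e0 k w).

Lemma attach_rel_sym w : symmetric e0 -> symmetric (attach w).
Proof. by move=> e0_sym [a|i] [b|j] //=; rewrite ?e0_sym // /path_rel orbC. Qed.

Lemma deg_attach_inl w a :
  deg (attach w) (inl a) = (deg e0 a + (a == w))%N.
Proof.
rewrite /deg -!sum1_card big_sumType /=; congr addn.
  by apply: eq_bigl => b; rewrite !inE.
case: eqP => [_|_] /=; last by rewrite big_pred0 // => j; rewrite inE.
by rewrite (big_pred1 ord0) // => j; rewrite inE.
Qed.

Lemma deg_attach_inr w w' i :
  deg (attach w) (inr i) = deg (attach w') (inr i).
Proof.
rewrite /deg -!sum1_card !big_sumType /=.
congr addn; last by apply: eq_bigl => j; rewrite !inE.
case: (i == ord0).
  by rewrite (big_pred1 w) ?(big_pred1 w') // => b; rewrite inE andbT.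
by rewrite !big_pred0 // => b; rewrite inE andbF.
Qed.

Lemma attach_rel_move w w' :
  {in [predC [:: inl w; inl w']] &, attach w =2 attach w'}.
Proof.
move=> [a|i] [b|j]; rewrite !inE -!sum_eqE ?negb_or //=.
  by move=> /andP[/negbTE-> /negbTE->].
by move=> _ /andP[/negbTE-> /negbTE->].
Qed.

Lemma deg_attach_move w w' :
  {in [predC [:: inl w; inl w']], deg (attach w) =1 deg (attach w')}.
Proof.
move=> [a|i]; last by rewrite (deg_attach_inr w w').
by rewrite !inE -!sum_eqE /= negb_or !deg_attach_inl => /andP[/negbTE-> /negbTE->].
Qed.

Lemma attach_rel_pendant w a b y : deg e0 a = 1%N -> e0 a b ->
  attach w (inl a) y = (y \in inl b :: if a == w then [:: inr ord0] else [::]).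
Proof.
move=> deg_a e0ab; case: y => [c|j] /=; case: (a == w);
  by rewrite !inE -!sum_eqE /= ?(adj_pendantE _ deg_a e0ab) ?orbF.
Qed.

Lemma deg_row_attach_pendant (R : zmodType) (phi : nat -> nat -> R) w a b :
  deg e0 a = 1%N -> e0 a b ->
  deg_row phi (attach w) (inl a) =
    phi (deg (attach w) (inl a)) (deg (attach w) (inl b)) +
    (if a == w then phi (deg (attach w) (inl a)) (deg (attach w) (inr ord0)) else 0).
Proof.
move=> deg_a e0ab.
rewrite (@deg_row_nbhd _ _ _ _ _ (inl b :: if a == w then [:: inr ord0] else [::])).
- by case: (a == w); rewrite !big_cons big_nil ?addr0.
- by case: (a == w).
- by move=> y; apply: attach_rel_pendant.
Qed.

End Attach.

Section MovePendantPath.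
Variables (V0 : finType) (e0 : rel V0) (u1 u2 u3 u4 : V0) (k : nat).
Hypotheses (e0_sym : symmetric e0) (e0_u1u2 : e0 u1 u2) (e0_u3u4 : e0 u3 u4).
Hypotheses (deg_u1 : deg e0 u1 = 1%N) (deg_u2 : deg e0 u2 = 2%N).
Hypotheses (deg_u3 : (2 < deg e0 u3)%N) (deg_u4 : deg e0 u4 = 1%N).

Let E1 := attach_rel e0 k u1.
Let E2 := attach_rel e0 k u4.

Let e0_u4u3 : e0 u4 u3. Proof. by rewrite e0_sym. Qed.
Let u2_u1 : u2 != u1.
Proof. by apply: (neq_of_deg (e := e0)); rewrite deg_u2 deg_u1. Qed.
Let u2_u4 : u2 != u4.
Proof. by apply: (neq_of_deg (e := e0)); rewrite deg_u2 deg_u4. Qed.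
Let u3_u1 : u3 != u1.
Proof. by apply: (neq_of_deg (e := e0)); rewrite deg_u1 neq_ltn (ltnW deg_u3) orbT. Qed.
Let u3_u2 : u3 != u2.
Proof. by apply: (neq_of_deg (e := e0)); rewrite deg_u2 neq_ltn deg_u3 orbT. Qed.
Let u3_u4 : u3 != u4.
Proof. by apply: (neq_of_deg (e := e0)); rewrite deg_u4 neq_ltn (ltnW deg_u3) orbT. Qed.
Let u1_u4 : u1 != u4.
Proof.
apply: (contraTneq _ e0_u4u3) => <-.
by rewrite (adj_pendantE _ deg_u1 e0_u1u2).
Qed.

Lemma attach_moved_no_edge w :
  {in [:: inl u1; inl u4] &, forall x y, ~~ attach_rel e0 k w x y}.
Proof.
move=> x y; rewrite !inE => /orP[]/eqP-> /orP[]/eqP-> /=;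
  by rewrite ?(adj_pendantE _ deg_u1 e0_u1u2) ?(adj_pendantE _ deg_u4 e0_u4u3) eq_sym.
Qed.

Lemma deg_index_move_pendant_path (R : zmodType) (phi : nat -> nat -> R) :
  (forall a b, phi a b = phi b a) ->
  deg_index phi E1 - deg_index phi E2 =
    (phi 2 2 - phi 1 2 + (phi 1 (deg e0 u3) - phi 2 (deg e0 u3))) *+ 2.
Proof.
move=> phi_sym.
rewrite (deg_index_sub_local phi_sym (B := [in [:: inl u1; inl u4]]));
  try by [apply: attach_rel_sym | apply: attach_rel_move | apply: deg_attach_move
         | apply: attach_moved_no_edge].
have B_uniq : uniq ([:: inl u1; inl u4] : seq (V0 + 'I_k.+1)).
  by rewrite /= mem_seq1 -sum_eqE /= u1_u4.
rewrite -(big_uniq _ B_uniq) big_cons big_seq1.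
rewrite !(deg_row_attach_pendant _ _ _ deg_u1 e0_u1u2).
rewrite !(deg_row_attach_pendant _ _ _ deg_u4 e0_u4u3).
rewrite !deg_attach_inl deg_u1 deg_u2 deg_u4 !eqxx (negbTE u1_u4) (eq_sym u4).
rewrite (negbTE u1_u4) (negbTE u2_u1) (negbTE u2_u4) (negbTE u3_u1) (negbTE u3_u4).
rewrite !addn0 addn1 (deg_attach_inr _ u4 u1) /=.
set p := phi 2 (deg _ (inr ord0)).
congr (_ *+ 2); rewrite !addr0 [X in X + _]addrAC (addrC (phi 2 _) p) opprD.
by rewrite [phi 1 _ + _ in LHS]addrCA addrA addrK.
Qed.

Lemma deg_index_move_pendant_path_lt (R : numDomainType) (phi : nat -> nat -> R) :
  (forall a b, phi a b = phi b a) ->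
  0 < phi 2 2 - phi 1 2 + (phi 1 (deg e0 u3) - phi 2 (deg e0 u3)) ->
  deg_index phi E2 < deg_index phi E1.
Proof.
move=> phi_sym gap.
by rewrite -subr_gt0 deg_index_move_pendant_path // pmulrn_lgt0.
Qed.

End MovePendantPath.

Lemma sqrt_add_lt (R : rcfType) (a b c d : R) :
  0 <= a -> 0 <= b -> 0 <= c -> 0 <= d -> a + b = c + d -> c * d < a * b ->
  Num.sqrt c + Num.sqrt d < Num.sqrt a + Num.sqrt b.
Proof.
move=> a_ge0 b_ge0 c_ge0 d_ge0 sum_eq prod_lt.
have sqrt_prod_lt : Num.sqrt c * Num.sqrt d < Num.sqrt a * Num.sqrt b.
  by rewrite -!sqrtrM // ltr_sqrt // (le_lt_trans _ prod_lt) ?mulr_ge0.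
rewrite -(@ltr_pXn2r _ 2) ?nnegrE ?addr_ge0 ?sqrtr_ge0 //.
rewrite !sqrrD !sqr_sqrtr //.
lra.
Qed.

Definition SO_weight (R : rcfType) (a b : nat) : R := Num.sqrt (a%:R ^+ 2 + b%:R ^+ 2).
Definition SOred_weight (R : rcfType) (a b : nat) : R :=
  Num.sqrt ((a%:R - 1) ^+ 2 + (b%:R - 1) ^+ 2).

Lemma SO_deg_index (R : rcfType) (T : finType) (E : rel T) :
  SO R E = deg_index (SO_weight R) E / 2%:R.
Proof. by []. Qed.

Lemma SOred_deg_index (R : rcfType) (T : finType) (E : rel T) :
  SOred R E = deg_index (SOred_weight R) E / 2%:R.
Proof. by []. Qed.

Lemma SO_weight_gap (R : rcfType) (d : nat) : d = 3%N \/ d = 4%N ->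
  0 < SO_weight R 2 2 - SO_weight R 1 2 + (SO_weight R 1 d - SO_weight R 2 d).
Proof.
rewrite addrACA -opprD subr_gt0; case=> ->.
all: by apply: sqrt_add_lt; lra.
Qed.

Lemma SOred_weight_gap (R : rcfType) (d : nat) : d = 3%N \/ d = 4%N ->
  0 < SOred_weight R 2 2 - SOred_weight R 1 2 + (SOred_weight R 1 d - SOred_weight R 2 d).
Proof.
rewrite addrACA -opprD subr_gt0; case=> ->.
all: by apply: sqrt_add_lt; lra.
Qed.

Theorem lemma2p1 (R : rcfType) (V0 : finType) (e0 : rel V0)
  (u1 u2 u3 u4 : V0) (k : nat) :
  simple_graph e0 -> graph_connected e0 ->
  deg e0 u1 = 1%N -> deg e0 u2 = 2%N ->
  (deg e0 u3 = 3%N \/ deg e0 u3 = 4%N) -> deg e0 u4 = 1%N ->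
  e0 u1 u2 -> e0 u3 u4 ->
  SO R (attach_rel e0 k u1) > SO R (attach_rel e0 k u4) /\
  SOred R (attach_rel e0 k u1) > SOred R (attach_rel e0 k u4).
Proof.
move=> [e0_sym _] _ deg_u1 deg_u2 deg_u3 deg_u4 e0_u1u2 e0_u3u4.
have deg_u3_gt2 : (2 < deg e0 u3)%N by case: deg_u3 => ->.
rewrite !SO_deg_index !SOred_deg_index !ltr_pM2r ?invr_gt0 ?ltr0n //.
have move_lt := deg_index_move_pendant_path_lt k e0_sym e0_u1u2 e0_u3u4
  deg_u1 deg_u2 deg_u3_gt2 deg_u4.
split; apply: move_lt.
- by move=> a b; rewrite /SO_weight addrC.
- exact: SO_weight_gap.
- by move=> a b; rewrite /SOred_weight addrC.
- exact: SOred_weight_gap.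
Qed.
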